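(* Let $n\ge 64$ be a power of $2$ and let $z\in\mathbb{R}^n$ satisfy $\sum_{i}z(i)=0$ and $\|z\|_1=2$, so that $\sum_i z^+(i)=1$. Suppose $$\sum_{j = 1}^{\log (n/32)} \sum_{i \in B_j(z^+)} z^+(i) \geq \frac35 .$$ Let $j$ be chosen uniformly at random from $\{1,\dots,\log(n/32)\}$, let $r=2^j$, and let $S\subseteq[n]$ include each element independently with probability $1/r$. Then with probability at least $\frac{3}{20\log(n/32)}$ there exists $i\in S$ with $z^+(i)\geq 1/r$.
   Context: $z^+(i)=\max(0,z(i))$. For a nonnegative vector $x\in\mathbb{R}^n$ and integer $j\ge1$, the $j$-th bin is $B_j(x)=\{i: 2^{-j}\le x(i)<2^{-j+1}\}$. $\log$ is base 2. *)

From HB Require Import structures.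
From mathcomp Require Import all_boot all_order all_algebra.
Set Implicit Arguments. Unset Strict Implicit. Unset Printing Implicit Defensive.
Import Order.TTheory GRing.Theory Num.Theory.
Local Open Scope ring_scope.

Definition zplus (R : realFieldType) (n : nat) (z : 'I_n -> R) (i : 'I_n) : R :=
  Num.max 0 (z i).

Definition bin (R : realFieldType) (n : nat) (x : 'I_n -> R) (j : nat) : {set 'I_n} :=
  [set i | ((2 : R) ^ (- (j%:Z)) <= x i) && (x i < (2 : R) ^ (- (j%:Z) + 1))].

(* probability of the outcome S when each element of [n] is included
   independently with probability p *)
Definition subset_weight (R : realFieldType) (n : nat) (p : R) (S : {set 'I_n}) : R :=
  (\prod_(i in S) p) * (\prod_(i in ~: S) (1 - p)).

(* Probability, over j uniform in {1,..,L}, r = 2^j, and S a (1/r)-random subset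
   of [n], that some i in S has x(i) >= 1/r. *)
Definition success_prob (R : realFieldType) (n : nat) (x : 'I_n -> R) (L : nat) : R :=
  (L%:R)^-1 * \sum_(1 <= j < L.+1)
     \sum_(S : {set 'I_n})
        subset_weight (((2 : R) ^+ j)^-1) S *
        (if [exists i in S, ((2 : R) ^+ j)^-1 <= x i] then 1 else 0).

(** For a scale j put p = 2^-j and let c be the number of coordinates with
    z^+(i) >= p.  A p-random subset meets these coordinates with probability
    1 - (1 - p)^c >= cp/(1 + cp), by Bernoulli's inequality.  Every coordinate of
    the bin B_j lies in [p, 2p), so the mass m_j of B_j is at most 2cp; together
    with m_j <= ||z||_1 = 2 this gives a hitting probability of at least m_j/4.
    Averaging over the L = log(n/32) scales yields at least (3/5)/(4L). *)

From HB Require Import structures.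
From mathcomp Require Import all_boot all_order all_algebra.
From mathcomp Require Import lra.

Set Implicit Arguments.
Unset Strict Implicit.
Unset Printing Implicit Defensive.

Import Order.TTheory GRing.Theory Num.Theory.
Local Open Scope ring_scope.

Section ProductExpansion.
Variable R : comPzSemiRingType.

Lemma prod_if_in n (F G : 'I_n -> R) (J : {set 'I_n}) :
  \prod_i (if i \in J then F i else G i) = (\prod_(i in J) F i) * \prod_(i in ~: J) G i.
Proof. by rewrite big_if; congr (_ * _); apply: eq_bigl => i //; rewrite in_setC. Qed.

Lemma sum_subset_if n (F G : 'I_n -> R) :
  \sum_(S : {set 'I_n}) (\prod_(i in S) F i) * \prod_(i in ~: S) G i
  = \prod_i (F i + G i).
Proof.
rewrite (@bigA_distr R 0 1 (@GRing.mul R) (@GRing.add R)).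
by apply: eq_bigr => S _; rewrite prod_if_in.
Qed.

End ProductExpansion.

Lemma bernoulli_ineq (R : realDomainType) (p : R) c :
  0 <= p -> 1 + c%:R * p <= (1 + p) ^+ c.
Proof.
move=> p_ge0; elim: c => [|c IHc]; first by rewrite mul0r addr0.
have cpp_ge0 : 0 <= c%:R * p * p by rewrite !mulr_ge0.
rewrite exprSr; apply: le_trans (ler_wpM2r (addr_ge0 ler01 p_ge0) IHc).
rewrite -addn1 natrD; lra.
Qed.

Lemma expr1B_mul_le1 (R : realDomainType) (p : R) c :
  0 <= p <= 1 -> (1 - p) ^+ c * (1 + c%:R * p) <= 1.
Proof.
case/andP=> p_ge0 p_le1.
apply: le_trans (ler_wpM2l (exprn_ge0 _ _) (bernoulli_ineq c p_ge0)) _.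
  by rewrite subr_ge0.
by rewrite -exprMn exprn_ile1; nra.
Qed.

Definition hit_prob {R : realFieldType} {n : nat} (x : 'I_n -> R) (p : R) : R :=
  \sum_(S : {set 'I_n}) subset_weight p S * (if [exists i in S, p <= x i] then 1 else 0).

Lemma success_probE (R : realFieldType) n (x : 'I_n -> R) (L : nat) :
  success_prob x L = L%:R^-1 * \sum_(1 <= j < L.+1) hit_prob x ((2 : R) ^+ j)^-1.
Proof. by []. Qed.

Section RandomSubset.
Variable R : realFieldType.

Lemma sum_subset_weight n (p : R) : \sum_(S : {set 'I_n}) subset_weight p S = 1.
Proof. by rewrite sum_subset_if big1 // => i _; rewrite addrC subrK. Qed.

Lemma sum_subset_weight_avoid n (p : R) (P : pred 'I_n) :
  \sum_(S : {set 'I_n}) subset_weight p S * (if [exists i in S, P i] then 0 else 1)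
  = (1 - p) ^+ #|[set i | P i]|.
Proof.
pose F i := if P i then 0 else p.
have weight_avoid S : subset_weight p S * (if [exists i in S, P i] then 0 else 1)
    = (\prod_(i in S) F i) * \prod_(i in ~: S) (1 - p).
  case: existsP => [[i /andP [iS Pi]] | avoid].
    by rewrite mulr0 (bigD1 i) //= /F Pi !mul0r.
  rewrite mulr1; congr (_ * _); apply: eq_bigr => i iS.
  by rewrite /F; case: ifP => // Pi; case: avoid; exists i; rewrite iS.
rewrite (eq_bigr _ (fun S _ => weight_avoid S)) sum_subset_if.
rewrite -prodr_const [RHS]big_mkcond; apply: eq_bigr => i _.
by rewrite /F inE; case: (P i); rewrite ?add0r // addrC subrK.
Qed.

Lemma hit_probE n (x : 'I_n -> R) (p : R) :
  hit_prob x p = 1 - (1 - p) ^+ #|[set i | p <= x i]|.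
Proof.
have /= avoid := sum_subset_weight_avoid p (fun i => p <= x i).
rewrite -avoid -{1}(sum_subset_weight n p) -sumrB.
by apply: eq_bigr => S _; case: ifP; rewrite ?mulr1 ?mulr0 ?subr0 ?subrr.
Qed.

Lemma hit_prob_ge n (x : 'I_n -> R) (p : R) :
  0 <= p <= 1 ->
  #|[set i | p <= x i]|%:R * p / (1 + #|[set i | p <= x i]|%:R * p) <= hit_prob x p.
Proof.
move=> p01; have := expr1B_mul_le1 #|[set i | p <= x i]| p01.
rewrite hit_probE; set q := _ ^+ _; set t := _%:R * p => qt_le1.
have t_ge0 : 0 <= t by case/andP: p01 => p_ge0 _; rewrite mulr_ge0.
by rewrite ler_pdivrMr; lra.
Qed.

End RandomSubset.

Lemma bin_bounds (R : realFieldType) n (x : 'I_n -> R) j i :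
  i \in bin x j -> ((2 : R) ^+ j)^-1 <= x i < 2 * ((2 : R) ^+ j)^-1.
Proof. by rewrite inE expfzDr ?pnatr_eq0 // expr1z -exprnN mulrC. Qed.

Lemma bin_mass_le (R : realFieldType) n (x : 'I_n -> R) j :
  \sum_(i in bin x j) x i
  <= 2 * (#|[set i | ((2 : R) ^+ j)^-1 <= x i]|%:R * ((2 : R) ^+ j)^-1).
Proof.
set p := (_ ^+ j)^-1; apply: le_trans (_ : \sum_(i in bin x j) 2 * p <= _).
  by apply: ler_sum => i /bin_bounds /andP [_ /ltW].
rewrite sumr_const -mulrnAr ler_wpM2l // -mulr_natl ler_wpM2r ?invr_ge0 ?exprn_ge0 //.
rewrite ler_nat; apply/subset_leq_card/subsetP => i /bin_bounds /andP [p_le _].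
by rewrite inE.
Qed.

Lemma bin_mass_le_hit_prob (R : realFieldType) n (x : 'I_n -> R) j :
  (forall i, 0 <= x i) -> \sum_i x i <= 2 ->
  (\sum_(i in bin x j) x i) / 4 <= hit_prob x ((2 : R) ^+ j)^-1.
Proof.
move=> x_ge0 mass_le2.
have p01 : 0 <= ((2 : R) ^+ j)^-1 <= 1.
  by rewrite invr_ge0 exprn_ge0 //= invf_le1 ?exprn_gt0 // exprn_ege1 // ler1n.
apply: le_trans (hit_prob_ge x p01).
have := bin_mass_le x j; set p := (_ ^+ j)^-1.
set m := \sum_(i in _) _; set t := _ * p => m_le.
have m_ge0 : 0 <= m by rewrite sumr_ge0.
have m_le2 : m <= 2.
  by apply: le_trans mass_le2; rewrite [leRHS](bigID (mem (bin x j))) lerDl sumr_ge0.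
have t_ge0 : 0 <= t by lra.
have mt_le : m * t <= 2 * t by rewrite ler_wpM2r.
rewrite ler_pdivrMr // mulrAC ler_pdivlMr; lra.
Qed.

Lemma zplus_ge0 (R : realFieldType) n (z : 'I_n -> R) i : 0 <= zplus z i.
Proof. by rewrite le_max lexx. Qed.

Lemma sum_zplus_le_norm1 (R : realFieldType) n (z : 'I_n -> R) :
  \sum_i zplus z i <= \sum_i `|z i|.
Proof. by apply: ler_sum => i _; rewrite ge_max normr_ge0 ler_norm. Qed.

Theorem lemma4p3 (R : realFieldType) (k n : nat) (z : 'I_n -> R) :
  n = (2 ^ k)%N -> (64 <= n)%N ->
  \sum_(i < n) z i = 0 ->
  \sum_(i < n) `|z i| = 2 ->
  \sum_(1 <= j < (k - 5).+1) \sum_(i in bin (zplus z) j) zplus z i >= 3 / 5 ->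
  success_prob (zplus z) (k - 5) >= 3 / (20 * (k - 5)%:R).
Proof.
move=> _ _ _ norm1_z bins_mass; set L := (k - 5)%N.
have mass_le2 : \sum_i zplus z i <= 2 by rewrite -norm1_z sum_zplus_le_norm1.
have hit_ge : 3 / 20 <= \sum_(1 <= j < L.+1) hit_prob (zplus z) ((2 : R) ^+ j)^-1.
  apply: le_trans (ler_sum _ (fun j _ => bin_mass_le_hit_prob j (@zplus_ge0 _ _ z) mass_le2)).
  by rewrite -mulr_suml; lra.
by rewrite success_probE invfM mulrA mulrC ler_wpM2l ?invr_ge0.
Qed.
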